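(* Let $T$ be a non-abelian finite simple group, $k\geqslant 2$, $W=W(k,T)=T^k.(\mathrm{Out}(T)\times S_k)$ acting on $\Omega=[W:D]$, and let $t_1,\dots,t_k\in T$. Then $\{D,D(\varphi_{t_1},\dots,\varphi_{t_k})\}$ is a base for $W$ if and only if $t_1,\dots,t_k$ are distinct and $\mathrm{Hol}(T,\{t_1,\dots,t_k\})=1$.
   Context: $W(k,T)=\{(\alpha_1,\dots,\alpha_k)\pi\in\mathrm{Aut}(T)\wr S_k:\alpha_1\mathrm{Inn}(T)=\alpha_i\mathrm{Inn}(T)\ \forall i\}$, $D=\{(\alpha,\dots,\alpha)\pi:\alpha\in\mathrm{Aut}(T),\pi\in S_k\}$, $\Omega$ the right cosets of $D$ in $W$ with action by right multiplication. $\varphi_t$ is the inner automorphism $x\mapsto t^{-1}xt$. A base is a subset of $\Omega$ with trivial pointwise stabiliser. $\mathrm{Hol}(T)=T{:}\mathrm{Aut}(T)$ acts on $T$ by $t^{g\alpha}=(g^{-1}t)^\alpha$, and $\mathrm{Hol}(T,S)$ is the setwise stabiliser of $S\subseteq T$. *)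

From HB Require Import structures.
From mathcomp Require Import all_boot all_fingroup all_solvable.
Set Implicit Arguments. Unset Strict Implicit. Unset Printing Implicit Defensive.
Import GroupScope.

Section Wreath.
Variables (gT : finGroupType) (k : nat).

(* phi_t : x |-> t^-1 x t  (= x ^ t in mathcomp) as a permutation of T *)
Definition inn_perm (t : gT) : {perm gT} := perm (conjg_inj t).

Definition Inn_set : {set {perm gT}} := [set inn_perm t | t in [set: gT]].

(* the element (alpha_1,...,alpha_k) pi of Aut(T) wr S_k, realised as a
   permutation of 'I_k * T via its (right) imprimitive action
   (i, x) |-> (i^pi, x^{alpha_i}) *)
Definition wr_fun (a : {ffun 'I_k -> {perm gT}}) (pi : 'S_k)
  (x : 'I_k * gT) : 'I_k * gT := (pi x.1, a x.1 x.2).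

Lemma wr_fun_inj a pi : injective (wr_fun a pi).
Proof.
move=> [i x] [j y] [/perm_inj eij]; rewrite /= in eij; subst j.
by move/perm_inj => ->.
Qed.

Definition wr_perm a pi : {perm 'I_k * gT} := perm (@wr_fun_inj a pi).

(* condition defining W(k,T): all alpha_i in Aut(T), and all in the same
   coset of Inn(T) (alpha_i Inn(T) = alpha_j Inn(T) for all i, j) *)
Definition W_cond (a : {ffun 'I_k -> {perm gT}}) : bool :=
  [forall i, a i \in Aut [set: gT]] &&
  [forall i, forall j, (a i)^-1 * a j \in Inn_set].

Definition Wkt : {set {perm 'I_k * gT}} :=
  [set wr_perm p.1 p.2 | p in [set p : {ffun 'I_k -> {perm gT}} * 'S_k
                                  | W_cond p.1]].

Definition Dkt : {set {perm 'I_k * gT}} :=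
  [set wr_perm [ffun=> p.1] p.2 | p in [set p : {perm gT} * 'S_k
                                  | p.1 \in Aut [set: gT]]].

Definition phi_tuple (t : 'I_k -> gT) : {perm 'I_k * gT} :=
  wr_perm [ffun i => inn_perm (t i)] 1.

(* B (a set of right cosets of D in W) is a base for W acting on [W:D] by
   right multiplication: its pointwise stabiliser in W is trivial *)
Definition is_base (B : {set {set {perm 'I_k * gT}}}) : bool :=
  'C_Wkt(B | 'Rs) == 1.
End Wreath.

(* Hol(T) = T : Aut(T), elements (g, alpha), acting on T by
   t^{g alpha} = (g^-1 t)^alpha ; Hol(T,S) = setwise stabiliser of S *)
Definition Hol_stab (gT : finGroupType) (S : {set gT}) :
  {set gT * {perm gT}} :=
  [set p : gT * {perm gT} | (p.2 \in Aut [set: gT]) &&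
     ([set p.2 (p.1^-1 * s) | s in S] == S)].

From mathcomp Require Import all_boot all_fingroup all_solvable.
Set Implicit Arguments. Unset Strict Implicit. Unset Printing Implicit Defensive.
Import GroupScope.

(* Since D \in {D, D phi} is fixed exactly by the elements of
   D, the pointwise stabiliser of {D, D phi} (phi := (phi_t1, ..., phi_tk))
   consists of the x \in D with phi x \in D phi, i.e. phi x = d phi for some
   d \in D.  Writing x = (a,...,a)p and d = (b,...,b)q, the relation
   phi x = d phi says p = q and a(y^(t_l)) = b(y)^(t_(p l)) for all l, y.
   As T has trivial centre, such a relation forces a(g^-1 t_l) = t_(p l) for a
   single g \in T, i.e. (g, a) \in Hol(T) maps {t_1, ..., t_k} to itself
   (permuting the indices by p); conversely every such holomorph element
   (g, a) yields the relation with b = a phi_(a g).  Hence nontrivial stabiliser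
   elements correspond to nontrivial elements of Hol(T, {t_i}), together with
   the transposition (i j) when t_i = t_j. *)

Section WreathArithmetic.
Variables (gT : finGroupType) (k : nat).

Lemma wr_permE (a : {ffun 'I_k -> {perm gT}}) pi i x :
  wr_perm a pi (i, x) = (pi i, a i x).
Proof. by rewrite permE. Qed.

Lemma wr_permM (a b : {ffun 'I_k -> {perm gT}}) (pi s : 'S_k) :
  wr_perm a pi * wr_perm b s = wr_perm [ffun i => a i * b (pi i)] (pi * s).
Proof. by apply/permP => -[i x]; rewrite permM !wr_permE ffunE !permM. Qed.

Lemma wr_perm_eq1 (a : {ffun 'I_k -> {perm gT}}) pi :
  wr_perm a pi = 1 <-> pi = 1 /\ forall i, a i = 1.
Proof.
split=> [a1 | [-> a1]]; last first.
  by apply/permP => -[i x]; rewrite wr_permE a1 !perm1.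
have fix_ix i x : (pi i, a i x) = (i, x).
  by rewrite -wr_permE a1 perm1.
split=> [|i]; apply/permP.
  by move=> i; rewrite perm1; case: (fix_ix i 1).
by move=> x; rewrite perm1; case: (fix_ix i x).
Qed.

Lemma inn_permE (t x : gT) : inn_perm t x = x ^ t.
Proof. by rewrite permE. Qed.

Lemma inn_perm_Aut (t : gT) : inn_perm t \in Aut [set: gT].
Proof.
rewrite inE; apply/andP; split; first by apply/subsetP => y; rewrite inE.
by apply/morphicP => x y _ _; rewrite !inn_permE conjMg.
Qed.

Lemma diag_in_D (a : {perm gT}) (p : 'S_k) :
  a \in Aut [set: gT] -> wr_perm [ffun=> a] p \in Dkt gT k.
Proof. by move=> Aa; apply/imsetP; exists (a, p); rewrite // inE. Qed.

Lemma D1 : 1 \in Dkt gT k.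
Proof.
have <- : wr_perm [ffun=> 1 : {perm gT}] (1 : 'S_k) = 1.
  by apply/wr_perm_eq1; split=> // i; rewrite ffunE.
by rewrite diag_in_D ?group1.
Qed.

Lemma DM x y : x \in Dkt gT k -> y \in Dkt gT k -> x * y \in Dkt gT k.
Proof.
case/imsetP => -[a p]; rewrite inE /= => Aa ->.
case/imsetP => -[b q]; rewrite inE /= => Ab ->.
rewrite wr_permM; have -> : [ffun i => [ffun=> a] i * [ffun=> b] (p i)] =
  [ffun=> a * b] by apply/ffunP => i; rewrite !ffunE.
by rewrite diag_in_D ?groupM.
Qed.

Lemma D_rcoset x : x \in Dkt gT k -> Dkt gT k :* x = Dkt gT k.
Proof.
move=> Dx; apply/eqP; rewrite eqEcard card_rcoset leqnn andbT.
by apply/subsetP => z /rcosetP [y Dy ->]; apply: DM.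
Qed.

Lemma D_sub_W : Dkt gT k \subset Wkt gT k.
Proof.
apply/subsetP => x /imsetP [[a p]]; rewrite inE /= => Aa ->.
apply/imsetP; exists ([ffun=> a], p) => //; rewrite inE /W_cond /=.
apply/andP; split; apply/forallP => i; rewrite ?ffunE //.
apply/forallP => j; rewrite !ffunE mulVg; apply/imsetP; exists 1; rewrite ?inE //.
by apply/permP => y; rewrite inn_permE conjg1 perm1.
Qed.

End WreathArithmetic.

Section AutomorphismRules.
Variables (gT : finGroupType) (a : {perm gT}).
Hypothesis Aa : a \in Aut [set: gT].

Lemma autM x y : a (x * y) = a x * a y.
Proof. by rewrite -(autmE Aa) morphM ?inE. Qed.

Lemma autV x : a x^-1 = (a x)^-1.
Proof. by rewrite -(autmE Aa) morphV ?inE. Qed.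

Lemma autJ x y : a (x ^ y) = a x ^ a y.
Proof. by rewrite -(autmE Aa) morphJ ?inE. Qed.

End AutomorphismRules.

Lemma simple_nonabelian_center1 (gT : finGroupType) :
  simple [set: gT] -> ~~ abelian [set: gT] -> 'Z([set: gT]) = 1.
Proof.
case/simpleP => _ /(_ _ (center_normal [set: gT]%G)) [//|hZ] /negP[].
exact/center_idP.
Qed.

Lemma conj_inj_center1 (gT : finGroupType) (u w : gT) :
  'Z([set: gT]) = 1 -> (forall y, y ^ u = y ^ w) -> u = w.
Proof.
move=> Z1 conj_uw; have : u * w^-1 \in 'Z([set: gT]).
  apply/centerP; split=> [|y _]; first by rewrite inE.
  have fixy : y ^ (u * w^-1) = y by rewrite conjgM conj_uw conjgK.
  by rewrite /commute -{1}fixy conjgE !mulgA mulgV mul1g.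
by rewrite Z1 inE -eq_mulgV1 => /eqP.
Qed.

Lemma Hol_stab1 (gT : finGroupType) (S : {set gT}) : (1, 1) \in Hol_stab S.
Proof.
rewrite inE group1 /=; apply/eqP/setP => z; apply/imsetP/idP.
  by case=> s Ss ->; rewrite perm1 invg1 mul1g.
by move=> Sz; exists z; rewrite ?perm1 ?invg1 ?mul1g.
Qed.

Section BaseCriterion.
Variables (gT : finGroupType) (k : nat) (t : 'I_k -> gT).
Local Notation D := (Dkt gT k).
Local Notation phi := (phi_tuple t).

Lemma stab_pairP x : x \in 'C_(Wkt gT k)([set D; D :* phi] | 'Rs) <->
  x \in D /\ exists2 d, d \in D & phi * x = d * phi.
Proof.
split=> [|[Dx [d Dd phix]]]; last first.
  rewrite inE (subsetP (D_sub_W _ _)) //=.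
  apply/astabP => B /set2P [->|->] /=; rewrite rcosetE; first exact: D_rcoset.
  by rewrite -rcosetM phix rcosetM D_rcoset.
rewrite inE => /andP [_ /astabP fixB].
have fixD := fixB D (set21 _ _); have fixP := fixB _ (set22 D (D :* phi)).
rewrite /= rcosetE in fixD; rewrite /= rcosetE in fixP.
have Dx : x \in D by rewrite -fixD; apply/rcosetP; exists 1; rewrite ?mul1g ?D1.
split=> //; have : phi * x \in D :* phi :* x.
  by apply/rcosetP; exists phi => //; apply/rcosetP; exists 1; rewrite ?mul1g ?D1.
by rewrite fixP => /rcosetP [d Dd ->]; exists d.
Qed.

Lemma is_base_pairP : is_base [set D; D :* phi] <->
  forall x d, x \in D -> d \in D -> phi * x = d * phi -> x = 1.
Proof.
split=> [/eqP base x d Dx Dd phix | trivial_stab].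
  suff : x \in 'C_(Wkt gT k)([set D; D :* phi] | 'Rs) by rewrite base => /set1gP.
  by apply/stab_pairP; split=> //; exists d.
apply/eqP/setP => x; apply/idP/set1gP => [|->].
  by case/stab_pairP => Dx [d Dd]; apply: trivial_stab.
by apply/stab_pairP; split; [exact: D1 | exists 1; rewrite ?mulg1 ?mul1g ?D1].
Qed.

Lemma phi_intertwineP (a b : {ffun 'I_k -> {perm gT}}) (p q : 'S_k) :
  phi * wr_perm a p = wr_perm b q * phi <->
  p = q /\ forall l y, a l (y ^ t l) = b l y ^ t (p l).
Proof.
have lhsE l y : (phi * wr_perm a p) (l, y) = (p l, a l (y ^ t l)).
  by rewrite permM !wr_permE ffunE inn_permE perm1.
have rhsE l y : (wr_perm b q * phi) (l, y) = (q l, b l y ^ t (q l)).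
  by rewrite permM !wr_permE ffunE inn_permE perm1.
split=> [eq_phi | [pq rel]]; last first.
  by apply/permP => -[l y]; rewrite lhsE rhsE -pq rel.
have eq_at l y : (p l, a l (y ^ t l)) = (q l, b l y ^ t (q l)).
  by rewrite -lhsE -rhsE eq_phi.
have pq : p = q by apply/permP => l; case: (eq_at l 1).
by split=> // l y; rewrite pq; case: (eq_at l y).
Qed.

Lemma Hol_stab_permP (g : gT) (a : {perm gT}) : injective t ->
  (g, a) \in Hol_stab [set t i | i : 'I_k] <->
  a \in Aut [set: gT] /\ exists p : 'S_k, forall l, a (g^-1 * t l) = t (p l).
Proof.
move=> tinj; split=> [|[Aa [p hp]]]; last first.
  rewrite inE Aa /=; apply/eqP/setP => z; apply/imsetP/imsetP.
    by case=> s /imsetP [l _ ->] ->; exists (p l); rewrite ?hp.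
  case=> l _ ->; exists (t (p^-1 l)); first by apply/imsetP; exists (p^-1 l).
  by rewrite hp permKV.
rewrite inE /= => /andP [Aa /eqP img]; split=> //.
have fP i : exists j, t j == a (g^-1 * t i).
  have : a (g^-1 * t i) \in [set t i | i : 'I_k].
    by rewrite -img; apply/imsetP; exists (t i) => //; apply/imsetP; exists i.
  by case/imsetP => j _ ->; exists j.
pose f i := xchoose (fP i).
have fE i : t (f i) = a (g^-1 * t i) by apply/eqP; apply: (xchooseP (fP i)).
have finj : injective f.
  by move=> i j /(congr1 t); rewrite !fE => /perm_inj /mulgI /tinj.
by exists (perm finj) => l; rewrite permE fE.
Qed.

Lemma intertwine_holomorph (a b : {perm gT}) (p : 'S_k) (i0 : 'I_k) :
  'Z([set: gT]) = 1 -> a \in Aut [set: gT] ->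
  (forall l y, a (y ^ t l) = b y ^ t (p l)) ->
  exists g, forall l, a (g^-1 * t l) = t (p l).
Proof.
move=> Z1 Aa rel; pose u l := a (t l) * (t (p l))^-1.
have uE l y : a y ^ u l = b y.
  by rewrite /u conjgM -autJ // rel conjgK.
have u_const l : u l = u i0.
  by apply: conj_inj_center1 => // z; rewrite -(permKV a z) !uE.
exists (a^-1 (u i0)) => l.
by rewrite autM // autV // permKV -(u_const l) /u invMg invgK mulgKV.
Qed.

Lemma holomorph_intertwine (g : gT) (a : {perm gT}) (p : 'S_k) :
  a \in Aut [set: gT] -> (forall l, a (g^-1 * t l) = t (p l)) ->
  phi * wr_perm [ffun=> a] p = wr_perm [ffun=> a * inn_perm (a g)] p * phi.
Proof.
move=> Aa hol; apply/phi_intertwineP; split=> // l y.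
by rewrite !ffunE permM inn_permE autJ // -conjgM -(hol l) autM // autV // mulKVg.
Qed.

Lemma Hol_stab1_base (i0 : 'I_k) : 'Z([set: gT]) = 1 -> injective t ->
  Hol_stab [set t i | i : 'I_k] = [set (1, 1)] -> is_base [set D; D :* phi].
Proof.
move=> Z1 tinj Hol1.
apply/is_base_pairP => _ _ /imsetP [[a p] + ->] /imsetP [[b q] _ ->].
rewrite inE /= => Aa /phi_intertwineP [_ rel].
have diag_rel l y : a (y ^ t l) = b y ^ t (p l).
  by move: (rel l y); rewrite !ffunE.
have [g hol] := intertwine_holomorph i0 Z1 Aa diag_rel.
have := proj2 (Hol_stab_permP _ _ tinj) (conj Aa (ex_intro _ p hol)).
rewrite Hol1 => /set1P [g1 a1].
have p1 : p = 1.
  by apply/permP => l; apply: tinj; rewrite perm1 -hol g1 a1 invg1 mul1g perm1.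
by apply/wr_perm_eq1; split=> // l; rewrite ffunE.
Qed.

End BaseCriterion.

Section BaseConsequences.
Variables (gT : finGroupType) (k : nat) (t : 'I_k -> gT).
Local Notation D := (Dkt gT k).
Local Notation phi := (phi_tuple t).
Hypothesis base : is_base [set D; D :* phi].

(* A repeated value t_i = t_j would make the coordinate swap (1,...,1)(i j)
   commute with phi, hence a nontrivial stabiliser element. *)
Lemma base_injective : injective t.
Proof.
move=> i j tij; apply/eqP/negPn/negP => nij.
pose x := wr_perm [ffun=> 1 : {perm gT}] (tperm i j).
have phix : phi * x = x * phi.
  apply/phi_intertwineP; split=> // l y; rewrite !ffunE !perm1.
  by case: tpermP => [->|->|//]; rewrite tij.
have Dx : x \in D := diag_in_D (tperm i j) (group1 _).
have /wr_perm_eq1 [/(congr1 (fun r : 'S_k => r i))] :=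
  proj1 (is_base_pairP t) base x x Dx Dx phix.
by rewrite tpermL perm1 => /eqP; rewrite eq_sym (negbTE nij).
Qed.

(* A nontrivial (g, a) \in Hol(T, {t_i}) would give the nontrivial stabiliser
   element (a,...,a)p; the index i0 only records that k > 0. *)
Lemma base_Hol_stab1 (i0 : 'I_k) : Hol_stab [set t i | i : 'I_k] = [set (1, 1)].
Proof.
apply/eqP; rewrite eqEsubset sub1set Hol_stab1 andbT.
apply/subsetP => -[g a] /(Hol_stab_permP _ _ base_injective) [Aa [p hol]].
have /wr_perm_eq1 [p1 a1] := proj1 (is_base_pairP t) base _ _ (diag_in_D p Aa)
  (diag_in_D p (groupM Aa (inn_perm_Aut _)))
  (holomorph_intertwine Aa hol).
have {}a1 : a = 1 by move: (a1 i0); rewrite ffunE.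
have g1 : g = 1.
  move: (hol i0); rewrite p1 a1 !perm1 -{2}(mul1g (t i0)) => /mulIg/eqP.
  by rewrite invg_eq1 => /eqP.
by apply/set1P; rewrite g1 a1.
Qed.

End BaseConsequences.

Theorem lemma2p13 (gT : finGroupType) (k : nat) (t : 'I_k -> gT) :
  simple [set: gT] -> ~~ abelian [set: gT] -> 2 <= k ->
  (is_base [set Dkt gT k; Dkt gT k :* phi_tuple t] <->
   injective t /\ Hol_stab [set t i | i : 'I_k] = [set (1, 1)]).
Proof.
move=> simpleT nonabT k2; have i0 : 'I_k := Ordinal (leq_trans (isT : 0 < 2) k2).
split=> [base | [tinj Hol1]].
  by split; [exact: base_injective | exact: base_Hol_stab1 i0].
exact: Hol_stab1_base i0 (simple_nonabelian_center1 simpleT nonabT) tinj Hol1.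
Qed.
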